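(* Let $\mathcal H$ be a well-structured preconditioner set and $M\in\mathcal S^d_{++}$. Then the Frobenius-norm projection of $M$ onto $\mathcal H$, $\operatorname{proj}_{\mathcal H}(M)=\arg\min_{H\in\mathcal H}\|M-H\|_F^2$, equals $P_{\mathcal H}(M)^2$.
   Context: $\mathcal S^d_+$ (resp. $\mathcal S^d_{++}$) denotes the set of real symmetric positive semidefinite (resp. positive definite) $d\times d$ matrices; $\langle A,B\rangle=\operatorname{Tr}(A^\top B)$. A set $\mathcal H\subseteq\mathcal S_+^d$ is a well-structured preconditioner set if $\mathcal H=\mathcal S_+^d\cap\mathcal K$ for some set $\mathcal K$ of real $d\times d$ matrices that is closed under scalar multiplication, matrix addition and matrix multiplication and contains the identity $I_d$. For $M\in\mathcal S^d_{++}$, $P_{\mathcal H}(M):=\arg\min_{H\in\mathcal H\cap\mathcal S^d_{++}}\langle M,H^{-1}\rangle+\operatorname{Tr}(H)$ (the minimizer exists and is unique). *)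

From HB Require Import structures.
From mathcomp Require Import all_boot all_order all_algebra.
From mathcomp Require Import reals.
Set Implicit Arguments. Unset Strict Implicit. Unset Printing Implicit Defensive.
Import Order.TTheory GRing.Theory Num.Theory.
Local Open Scope ring_scope.

Section Defs.
Variables (R : realType) (d : nat).

Definition psd (A : 'M[R]_d) : Prop :=
  A^T = A /\ forall x : 'cV[R]_d, 0 <= (x^T *m A *m x) 0 0.

Definition pd (A : 'M[R]_d) : Prop :=
  A^T = A /\ forall x : 'cV[R]_d, x != 0 -> 0 < (x^T *m A *m x) 0 0.

Definition frob_inner (A B : 'M[R]_d) : R := \tr (A^T *m B).

Definition frob_sq (A : 'M[R]_d) : R := \sum_(i < d) \sum_(j < d) (A i j) ^+ 2.

Definition matrix_algebra_set (K : 'M[R]_d -> Prop) : Prop :=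
  [/\ forall (a : R) A, K A -> K (a *: A),
      forall A B, K A -> K B -> K (A + B),
      forall A B, K A -> K B -> K (A *m B)
    & K 1%:M].

Definition well_structured (Hs : 'M[R]_d -> Prop) : Prop :=
  exists K : 'M[R]_d -> Prop,
    matrix_algebra_set K /\ forall A, Hs A <-> (psd A /\ K A).

Definition is_PH (Hs : 'M[R]_d -> Prop) (M P : 'M[R]_d) : Prop :=
  (Hs P /\ pd P) /\
  forall H, Hs H -> pd H ->
    frob_inner M (invmx P) + \tr P <= frob_inner M (invmx H) + \tr H.

Definition is_frob_proj (Hs : 'M[R]_d -> Prop) (M Q : 'M[R]_d) : Prop :=
  Hs Q /\ forall H, Hs H -> frob_sq (M - Q) <= frob_sq (M - H).

End Defs.

From HB Require Import structures.
From mathcomp Require Import all_boot all_order all_algebra.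
From mathcomp Require Import reals.
From mathcomp.algebra_tactics Require Import ring lra.
Import Order.TTheory GRing.Theory Num.Theory.
Set Implicit Arguments. Unset Strict Implicit. Unset Printing Implicit Defensive.
Local Open Scope ring_scope.

(* Let Pi be the inverse of P = P_H(M). The algebra K is closed under inversion
   (by Cayley-Hamilton), so for X in Hs and |s| small the matrix Pi + s X is
   positive definite and its inverse H_s lies again in Hs. Since
   H_s = P - s P X P + s^2 P X H_s X P, the objective at H_s equals its value
   at P plus s (<M, X> - <P^2, X>) + O(s^2); minimality of P forces
   <M - P^2, X> = 0 for every X in Hs. As P^2 lies in Hs, Pythagoras gives
   ||M - H||^2 = ||M - P^2||^2 + ||P^2 - H||^2 for H in Hs. *)

Section ScalarFacts.
Variable R : realFieldType.

Lemma discr_le_of_quad_ge0 (a b c : R) : 0 <= c ->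
  (forall s, 0 <= a + 2 * s * b + s ^+ 2 * c) -> b ^+ 2 <= a * c.
Proof.
move=> c_ge0 quad_ge0; have [c0|c_neq0] := eqVneq c 0.
  rewrite c0 mulr0; have [->|b_neq0] := eqVneq b 0; first by lra.
  have := quad_ge0 (- (a + 1) / (2 * b)).
  have -> : 2 * (- (a + 1) / (2 * b)) * b = - (a + 1) by field; rewrite b_neq0.
  rewrite c0 mulr0; lra.
have c_gt0 : 0 < c by rewrite lt0r c_neq0.
have := quad_ge0 (- (b / c)).
have : (b / c) * c = b by field.
move: (b / c) => s sc h.
have -> : b ^+ 2 = a * c + c * (s * b - a) by rewrite -sc; ring.
suff : c * (s * b - a) <= 0 by lra.
by apply: mulr_ge0_le0; [lra | nra].
Qed.

Lemma linear_coef_eq0 (a k e : R) : 0 < e ->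
  (forall s, `|s| <= e -> 0 <= s * a + s ^+ 2 * k) -> a = 0.
Proof.
move=> e_gt0 quad_ge0.
suff coef_ge0 b : (forall s, 0 <= s <= e -> 0 <= s * b + s ^+ 2 * k) -> 0 <= b.
  have : 0 <= a by apply: coef_ge0 => s /andP[s0 se]; apply: quad_ge0; rewrite ger0_norm.
  suff : 0 <= - a by lra.
  apply: coef_ge0 => s /andP[s0 se]; have := quad_ge0 (- s).
  by rewrite normrN ger0_norm // sqrrN mulNr mulrN => /(_ se).
move=> germ_ge0; rewrite leNgt; apply/negP => b_lt0.
have den_gt0 : 0 < 2 * `|k| + 1 by have := normr_ge0 k; lra.
pose t := Num.min e (- b / (2 * `|k| + 1)).
have t_gt0 : 0 < t by rewrite lt_min e_gt0 /= divr_gt0 //; lra.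
have t_le : t * (2 * `|k| + 1) <= - b by rewrite -ler_pdivlMr // ge_min lexx orbT.
have := germ_ge0 t; rewrite ltW //= ge_min lexx => /(_ isT).
have : t ^+ 2 * k <= t ^+ 2 * `|k| by rewrite ler_wpM2l ?sqr_ge0 ?ler_norm.
nra.
Qed.

Lemma sqr_le_mul_le (a b : R) : 0 <= b -> a ^+ 2 <= a * b -> a <= b.
Proof. by move=> b_ge0 h; nra. Qed.

End ScalarFacts.

Section BilinearForm.
Variables (R : comPzRingType) (n : nat).
Implicit Types (A B : 'M[R]_n) (u v w : 'cV[R]_n).

Definition bform A u v : R := (u^T *m A *m v) 0 0.
Definition qform A u : R := bform A u u.

Lemma bformDmx A B u v : bform (A + B) u v = bform A u v + bform B u v.
Proof. by rewrite /bform mulmxDr mulmxDl mxE. Qed.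

Lemma bformZmx a A u v : bform (a *: A) u v = a * bform A u v.
Proof. by rewrite /bform -scalemxAr -scalemxAl mxE. Qed.

Lemma bformDl A u v w : bform A (u + v) w = bform A u w + bform A v w.
Proof. by rewrite /bform linearD /= !mulmxDl mxE. Qed.

Lemma bformZl a A u v : bform A (a *: u) v = a * bform A u v.
Proof. by rewrite /bform linearZ /= -!scalemxAl mxE. Qed.

Lemma bformDr A u v w : bform A u (v + w) = bform A u v + bform A u w.
Proof. by rewrite /bform mulmxDr mxE. Qed.

Lemma bformZr a A u v : bform A u (a *: v) = a * bform A u v.
Proof. by rewrite /bform -scalemxAr mxE. Qed.

Lemma bformC A u v : A^T = A -> bform A u v = bform A v u.
Proof.
move=> symA; rewrite /bform.
transitivity ((u^T *m A *m v)^T 0 0); first by rewrite [RHS]mxE.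
by rewrite !trmx_mul trmxK symA mulmxA.
Qed.

Lemma bform_mulmx A B u v : bform (A *m B) u v = bform A u (B *m v).
Proof. by rewrite /bform !mulmxA. Qed.

Lemma qformDZmx A B a u : qform (A + a *: B) u = qform A u + a * qform B u.
Proof. by rewrite /qform bformDmx bformZmx. Qed.

Lemma qformDZ A u v a : A^T = A ->
  qform A (u + a *: v) = qform A u + 2 * a * bform A u v + a ^+ 2 * qform A v.
Proof.
by move=> symA; rewrite /qform bformDl !bformDr !bformZr !bformZl (bformC v u symA); ring.
Qed.

Lemma bform_delta A i v : bform A (delta_mx i 0) v = (A *m v) i 0.
Proof. by rewrite /bform trmx_delta -mulmxA -rowE mxE. Qed.

Lemma qform_delta A i : qform A (delta_mx i 0) = A i i.
Proof.
rewrite /qform bform_delta mxE (bigD1 i) //= mxE !eqxx mulr1 big1 ?addr0 //.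
by move=> j /negbTE ji; rewrite mxE ji mulr0.
Qed.

Lemma mxtrace_qform A : \tr A = \sum_i qform A (delta_mx i 0).
Proof. by apply: eq_bigr => i _; rewrite qform_delta. Qed.

Lemma qform1 w : qform 1%:M w = \sum_i w i 0 ^+ 2.
Proof. by rewrite /qform /bform mulmx1 mxE; apply: eq_bigr => i _; rewrite mxE expr2. Qed.

Lemma mxtrace_qform_col A B : \tr (B^T *m A *m B) = \sum_i qform A (col i B).
Proof.
apply: eq_bigr => i _; rewrite colE -qform_delta /qform /bform trmx_mul.
by rewrite !mulmxA.
Qed.

End BilinearForm.

Section PositiveMatrices.
Variables (R : realType) (n : nat).
Implicit Types (A P X G : 'M[R]_n) (u v x : 'cV[R]_n).

Lemma psd_cauchy_schwarz A u v : psd A -> bform A u v ^+ 2 <= qform A u * qform A v.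
Proof.
case=> symA A_ge0; apply: discr_le_of_quad_ge0; first exact: A_ge0.
by move=> s; rewrite -qformDZ //; apply: A_ge0.
Qed.

Lemma qform1_ge0 x : 0 <= qform 1%:M x.
Proof. by rewrite qform1 sumr_ge0 // => i _; rewrite sqr_ge0. Qed.

Lemma psd1 : psd (1%:M : 'M[R]_n).
Proof. by split; [rewrite trmx1 | exact: qform1_ge0]. Qed.

Lemma psd_mxtrace_ge0 A : psd A -> 0 <= \tr A.
Proof. by case=> _ A_ge0; rewrite mxtrace_qform sumr_ge0 // => i _; apply: A_ge0. Qed.

Lemma psd_qform_le_mxtrace X x : psd X -> qform X x <= qform 1%:M x * \tr X.
Proof.
move=> psdX; apply: sqr_le_mul_le.
  by rewrite mulr_ge0 ?qform1_ge0 ?psd_mxtrace_ge0.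
have cs := psd_cauchy_schwarz x (X *m x) psd1.
rewrite -bform_mulmx mul1mx -/(qform X x) in cs.
apply: le_trans cs _; rewrite mulrCA; apply: ler_wpM2l; first exact: qform1_ge0.
rewrite qform1 mxtrace_qform mulr_sumr; apply: ler_sum => i _.
by rewrite -bform_delta mulrC; apply: psd_cauchy_schwarz.
Qed.

Lemma pd_psd A : pd A -> psd A.
Proof.
case=> symA A_gt0; split => // x; have [->|x_neq0] := eqVneq x 0.
  by rewrite mulmx0 mxE.
exact/ltW/A_gt0.
Qed.

Lemma pd_unitmx A : pd A -> A \in unitmx.
Proof.
case=> _ A_gt0; rewrite -row_free_unit -kermx_eq0; apply/eqP/row_matrixP => i.
rewrite row0; apply/eqP/negP => /negP x_neq0.
have := A_gt0 (row i (kermx A))^T; rewrite trmx_eq0 => /(_ x_neq0).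
by rewrite trmxK -row_mul mulmx_ker row0 mul0mx mxE ltxx.
Qed.

Lemma pd_invmx A : pd A -> pd (invmx A).
Proof.
move=> pdA; have unitA := pd_unitmx pdA; case: pdA => symA A_gt0.
split=> [|x x_neq0]; first by rewrite trmx_inv symA.
have y_neq0 : invmx A *m x != 0.
  by apply: contraNneq x_neq0 => y0; rewrite -(mulKVmx unitA x) y0 mulmx0.
have := A_gt0 _ y_neq0; congr (_ < _).
rewrite trmx_mul trmx_inv symA -!mulmxA (mulmxA A) mulmxV // mul1mx.
by rewrite mulmxA.
Qed.

Lemma qform_invmx_mulmx P x : P^T = P -> P \in unitmx ->
  qform (invmx P) (P *m x) = qform P x.
Proof.
move=> symP unitP; rewrite /qform /bform trmx_mul symP -!mulmxA.
by rewrite (mulmxA (invmx P)) mulVmx // mul1mx mulmxA.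
Qed.

Lemma qform1_le_mxtrace_invmx P x : pd P -> qform 1%:M x <= \tr P * qform (invmx P) x.
Proof.
move=> pdP; have [symP _] := pd_psd pdP.
have [_ Pinv_ge0] := pd_psd (pd_invmx pdP).
have cs := psd_cauchy_schwarz x (P *m x) (pd_psd (pd_invmx pdP)).
rewrite -bform_mulmx mulVmx ?qform_invmx_mulmx ?pd_unitmx // in cs.
apply: sqr_le_mul_le.
  by apply: mulr_ge0; [exact/psd_mxtrace_ge0/pd_psd | exact: Pinv_ge0].
apply: le_trans cs _.
have -> : qform 1%:M x * (\tr P * qform (invmx P) x) =
          qform (invmx P) x * (qform 1%:M x * \tr P) by ring.
by apply: ler_wpM2l; [exact: Pinv_ge0 | exact/psd_qform_le_mxtrace/pd_psd].
Qed.

Lemma psd_qform_le_invmx X P x : psd X -> pd P ->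
  qform X x <= \tr X * \tr P * qform (invmx P) x.
Proof.
move=> psdX pdP; apply: le_trans (psd_qform_le_mxtrace x psdX) _.
rewrite mulrC -mulrA ler_wpM2l ?psd_mxtrace_ge0 //.
exact: qform1_le_mxtrace_invmx.
Qed.

(* Inversion reverses the Loewner order: expand 0 <= qform (invmx P) (P x - a G^-1 x). *)
Lemma qform_invmx_le P G (a : R) : pd P -> pd G -> 0 < a ->
  (forall x, a * qform (invmx P) x <= qform G x) ->
  forall x, a * qform (invmx G) x <= qform P x.
Proof.
move=> pdP pdG a_gt0 G_ge x; have [symP _] := pd_psd pdP.
have [symG _] := pd_psd pdG.
have Pinv_ge0 z : 0 <= qform (invmx P) z by have [_] := pd_psd (pd_invmx pdP); apply.
have unitP := pd_unitmx pdP; have unitG := pd_unitmx pdG.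
set y := invmx G *m x.
have Gy : G *m y = x by rewrite mulKVmx.
have -> : qform (invmx G) x = qform G y.
  by rewrite -[in LHS]Gy qform_invmx_mulmx.
have cross : bform (invmx P) (P *m x) y = qform G y.
  rewrite bformC ?trmx_inv ?symP // -bform_mulmx mulVmx //.
  by rewrite -[in LHS]Gy -bform_mulmx mul1mx.
have := Pinv_ge0 (P *m x + (- a) *: y).
rewrite qformDZ ?trmx_inv ?symP // cross qform_invmx_mulmx //.
have := G_ge y; nra.
Qed.

Lemma psd_sqr P : P^T = P -> psd (P *m P).
Proof.
move=> symP; split=> [|x]; first by rewrite trmx_mul symP.
have -> : (x^T *m (P *m P) *m x) 0 0 = qform 1%:M (P *m x).
  by rewrite /qform /bform mulmx1 trmx_mul symP !mulmxA.
exact: qform1_ge0.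
Qed.

End PositiveMatrices.

Lemma invmx_addZ (R : comUnitRingType) n (P X : 'M[R]_n) s :
  P \in unitmx -> invmx P + s *: X \in unitmx ->
  invmx (invmx P + s *: X) =
    P - s *: (P *m X *m P) + s ^+ 2 *: (P *m X *m invmx (invmx P + s *: X) *m X *m P).
Proof.
move=> unitP; set G := invmx P + s *: X => unitG; set H := invmx G.
have H_left : H = P - s *: (H *m X *m P).
  apply/eqP; rewrite eq_sym subr_eq -[P in P == _]mul1mx -(mulVmx unitG) -/H.
  by rewrite /G mulmxDr mulmxDl mulmxKV // -scalemxAr -scalemxAl.
have H_right : H = P - s *: (P *m X *m H).
  apply/eqP; rewrite eq_sym subr_eq -[P in P == _]mulmx1 -(mulmxV unitG) -/H.
  by rewrite /G mulmxDl mulmxDr mulKVmx // -scalemxAl -scalemxAr mulmxA.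
rewrite {1}H_left {1}H_right mulmxBl mulmxBl -!scalemxAl.
by rewrite scalerBr scalerA -expr2 opprB addrA addrAC.
Qed.

Lemma matrix_algebra_set_horner (R : realType) n (K : 'M[R]_n.+1 -> Prop) A p :
  matrix_algebra_set K -> K A -> K (horner_mx A p).
Proof.
case=> KZ KD KM K1 KA; elim/poly_ind: p => [|p c IH].
  by rewrite rmorph0 -(scale0r 1%:M); apply: KZ.
rewrite rmorphD rmorphM /= horner_mx_X horner_mx_C -scalemx1.
by apply: KD; [apply: KM | apply: KZ].
Qed.

Lemma matrix_algebra_set_invmx (R : realType) n (K : 'M[R]_n -> Prop) A :
  matrix_algebra_set K -> K A -> A \in unitmx -> K (invmx A).
Proof.
case: n K A => [|n] K A algK KA unitA.
  by rewrite (_ : invmx A = 1%:M); [case: algK | apply/matrixP => [[]]].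
have [KZ _ _ _] := algK.
set p := char_poly A.
have p0_neq0 : p`_0 != 0.
  by rewrite char_poly_det mulf_neq0 ?signr_eq0 // -unitfE -unitmxE.
have : horner_mx A (drop_poly 1 p) *m A = - p`_0 *: 1%:M.
  have := Cayley_Hamilton A; rewrite -/p -{1}(poly_take_drop 1 p).
  rewrite rmorphD rmorphM /= horner_mx_X mulmxE => /eqP.
  rewrite addrC addr_eq0 => /eqP ->.
  suff -> : take_poly 1 p = (p`_0)%:P by rewrite horner_mx_C scaleNr scalemx1.
  by apply/polyP => i; rewrite coef_take_poly coefC; case: i.
move=> /(congr1 (mulmx^~ (invmx A))); rewrite -mulmxA mulmxV // mulmx1 => hornerE.
have -> : invmx A = - (p`_0)^-1 *: horner_mx A (drop_poly 1 p).
  by rewrite hornerE -scalemxAl mul1mx scalerA mulrNN mulVf // scale1r.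
exact/KZ/(matrix_algebra_set_horner _ algK KA).
Qed.

Section Perturbation.
Variables (R : realType) (n : nat).
Implicit Types (M P X G : 'M[R]_n).

Lemma ph_objective_perturb M P X s (G := invmx P + s *: X) :
  M^T = M -> P \in unitmx -> G \in unitmx ->
  frob_inner M (invmx (invmx G)) + \tr (invmx G) =
    frob_inner M (invmx P) + \tr P + s * (\tr (M *m X) - \tr (P *m P *m X))
    + s ^+ 2 * \tr (P *m X *m invmx G *m X *m P).
Proof.
move=> symM unitP unitG; rewrite /frob_inner symM invmxK [in \tr (invmx _)]invmx_addZ //.
rewrite mulmxDr !mxtraceD raddfN /= -scalemxAr !mxtraceZ -/G.
by rewrite (mxtrace_mulC (P *m X)) mulmxA; ring.
Qed.

Lemma qform_invmx_addZ_ge P X s x : pd P -> psd X ->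
  `|s| * (\tr X * \tr P) <= 1 / 2 ->
  1 / 2 * qform (invmx P) x <= qform (invmx P + s *: X) x.
Proof.
move=> pdP psdX s_small; rewrite qformDZmx.
have [_ Pinv_ge0] := pd_psd (pd_invmx pdP); have [_ X_ge0] := psdX.
have X_le := psd_qform_le_invmx x psdX pdP.
have : `|s| * qform X x <= 1 / 2 * qform (invmx P) x.
  apply: le_trans (ler_wpM2l (normr_ge0 s) X_le) _.
  by rewrite mulrA ler_wpM2r //; apply: Pinv_ge0.
have : - (`|s| * qform X x) <= s * qform X x.
  by rewrite -mulNr ler_wpM2r ?X_ge0 // lerNl -normrN ler_norm.
have := Pinv_ge0 x; lra.
Qed.

Lemma mxtrace_invmx_sandwich_le P X G : pd P -> pd G -> X^T = X ->
  (forall x, 1 / 2 * qform (invmx P) x <= qform G x) ->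
  \tr (P *m X *m invmx G *m X *m P) <= 2 * \tr (P *m X *m P *m X *m P).
Proof.
move=> pdP pdG symX G_ge; have [symP _] := pd_psd pdP.
have colE A : \tr (P *m X *m A *m X *m P) = \sum_i qform A (col i (X *m P)).
  by rewrite -mxtrace_qform_col trmx_mul symP symX !mulmxA.
rewrite !colE mulr_sumr; apply: ler_sum => i _.
have half_gt0 : (0 : R) < 1 / 2 by lra.
have := qform_invmx_le pdP pdG half_gt0 G_ge (col i (X *m P)); lra.
Qed.

End Perturbation.

Section FrobeniusNorm.
Variables (R : realType) (n : nat).
Implicit Types A B : 'M[R]_n.

Lemma frob_sq_mxtrace A : frob_sq A = \tr (A^T *m A).
Proof.
rewrite /frob_sq /mxtrace exchange_big; apply: eq_bigr => i _.
by rewrite mxE; apply: eq_bigr => j _; rewrite !mxE expr2.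
Qed.

Lemma frob_sq_ge0 A : 0 <= frob_sq A.
Proof. by rewrite sumr_ge0 // => i _; rewrite sumr_ge0 // => j _; rewrite sqr_ge0. Qed.

Lemma frob_sq_eq0 A : frob_sq A = 0 -> A = 0.
Proof.
move=> A0; apply/matrixP => i j; rewrite mxE; apply/eqP; rewrite -sqrf_eq0; apply/eqP.
have row0 k : \sum_j A k j ^+ 2 = 0.
  by apply: (psumr_eq0P _ A0) => // k' _; rewrite sumr_ge0 // => ? _; exact: sqr_ge0.
by apply: (psumr_eq0P _ (row0 i)) => // k _; exact: sqr_ge0.
Qed.

Lemma frob_sq_add_orth A B : \tr (A^T *m B) = 0 ->
  frob_sq (A + B) = frob_sq A + frob_sq B.
Proof.
move=> orthAB; have orthBA : \tr (B^T *m A) = 0 by rewrite -mxtrace_tr trmx_mul trmxK.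
rewrite !frob_sq_mxtrace [(A + B)^T]raddfD /= mulmxDl !mulmxDr !mxtraceD orthAB orthBA.
by rewrite addr0 add0r.
Qed.

End FrobeniusNorm.

Section FirstOrderCondition.
Variables (R : realType) (n : nat) (Hs K : 'M[R]_n -> Prop) (M P : 'M[R]_n).
Hypotheses (algK : matrix_algebra_set K) (HsE : forall A, Hs A <-> psd A /\ K A).
Hypotheses (pdM : pd M) (PH_P : is_PH Hs M P).

Lemma is_PH_stationary X : Hs X -> \tr (M *m X) = \tr (P *m P *m X).
Proof.
move=> /HsE[psdX KX]; have [KZ KD _ _] := algK.
have [[/HsE[psdP KP] pdP] P_min] := PH_P.
have [symX _] := psdX; have [symPinv _] := pd_psd (pd_invmx pdP).
set c := \tr X * \tr P.
have c_ge0 : 0 <= c by rewrite mulr_ge0 ?psd_mxtrace_ge0.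
apply/eqP; rewrite -subr_eq0; apply/eqP.
(* For |s| <= 1 / (2 (c + 1)) we get Pi + s X >= Pi / 2, which keeps it positive
   definite and bounds the second-order term of the objective. *)
apply: (@linear_coef_eq0 _ _ (2 * \tr (P *m X *m P *m X *m P)) (1 / (2 * (c + 1)))).
  by rewrite divr_gt0 //; lra.
move=> s s_small; set G := invmx P + s *: X.
have G_ge x : 1 / 2 * qform (invmx P) x <= qform G x.
  apply: qform_invmx_addZ_ge => //; rewrite -/c.
  have : `|s| * (2 * (c + 1)) <= 1 by rewrite -ler_pdivlMr //; lra.
  have := normr_ge0 s; nra.
have pdG : pd G.
  split=> [|x x_neq0]; first by rewrite linearD linearZ /= symPinv symX.
  apply: lt_le_trans (G_ge x); rewrite mulr_gt0 //; last exact: (pd_invmx pdP).2.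
  by lra.
have unitG := pd_unitmx pdG.
have KG : K G by apply: KD; [exact: matrix_algebra_set_invmx (pd_unitmx pdP) | exact: KZ].
have HsH : Hs (invmx G).
  by apply/HsE; split; [exact/pd_psd/pd_invmx | exact: matrix_algebra_set_invmx].
have := P_min _ HsH (pd_invmx pdG).
rewrite ph_objective_perturb ?(pd_unitmx pdP) ?pdM.1 //.
have := mxtrace_invmx_sandwich_le pdP pdG symX G_ge.
have := sqr_ge0 s; nra.
Qed.

Lemma is_PH_sqr_in : Hs (P *m P).
Proof.
have [[/HsE[[symP _] KP] _] _] := PH_P; have [_ _ KM _] := algK.
by apply/HsE; split; [exact: psd_sqr | exact: KM].
Qed.

Lemma is_PH_pythagoras H : Hs H ->
  frob_sq (M - H) = frob_sq (M - P *m P) + frob_sq (P *m P - H).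
Proof.
move=> HsH; have [[/HsE[[symP _] _] _] _] := PH_P.
rewrite -frob_sq_add_orth ?addrA ?subrK //.
rewrite [(M - _)^T]raddfB /= pdM.1 trmx_mul symP mulmxBl !mulmxBr !raddfB /=.
by rewrite (is_PH_stationary is_PH_sqr_in) (is_PH_stationary HsH); ring.
Qed.

End FirstOrderCondition.

Theorem lemmaA4 (R : realType) (d : nat) (Hs : 'M[R]_d -> Prop) (M P : 'M[R]_d) :
  well_structured Hs -> pd M -> is_PH Hs M P ->
  forall Q : 'M[R]_d, is_frob_proj Hs M Q <-> Q = P *m P.
Proof.
move=> [K [algK HsE]] pdM PH_P Q.
have sqr_in := is_PH_sqr_in algK HsE PH_P.
have pythagoras := is_PH_pythagoras algK HsE pdM PH_P.
split=> [[HsQ Q_min] | ->]; last first.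
  by split=> // H HsH; rewrite [X in _ <= X]pythagoras // lerDl frob_sq_ge0.
have : frob_sq (P *m P - Q) = 0.
  have := Q_min _ sqr_in; rewrite pythagoras //.
  have := frob_sq_ge0 (P *m P - Q); have := frob_sq_ge0 (M - P *m P); lra.
by move/frob_sq_eq0/eqP; rewrite subr_eq0 => /eqP.
Qed.
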